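(* Let $K,L>0$ and $h>0$. The one-dimensional finite difference operator $F^{1D,e,\delta}$ is Lipschitz continuous with constant \[ C^h=\frac Kh+\frac{2L}{h^2}. \]
   Context: With $A(p,q)=(p^2q)^{1/3}$ (real cube root), $A^\delta(p,q)=\operatorname{sgn}(q)\min(\lvert A(p,q)\rvert,K\lvert p\rvert,L\lvert q\rvert)$ ($\operatorname{sgn}(0)=0$), $A^{\delta,\pm}(p,q)=A^\delta(p^\pm,q^\pm)$ where $x^+=\max(x,0)$, $x^-=\min(x,0)$, the scheme on the uniform grid of spacing $h$ is $-F^{1D,e,\delta}[u]=A^{\delta,+}(\lvert u_x^h\rvert^+,-u_{xx}^h)+A^{\delta,-}(-\lvert u_x^h\rvert^-,-u_{xx}^h)$, with $\lvert u_x^h\rvert^+=\max\{\frac{u(x)-u(x+h)}h,\frac{u(x)-u(x-h)}h,0\}$, $-\lvert u_x^h\rvert^-=\min\{\frac{u(x)-u(x+h)}h,\frac{u(x)-u(x-h)}h,0\}$, $u_{xx}^h=\frac{u(x+h)-2u(x)+u(x-h)}{h^2}$. Writing a finite difference operator as $F^h[u](x)=F^h(x,u(x),u(x)-u(\cdot))$, it is Lipschitz continuous with constant $C$ if $\lvert F^h(x,r,v(\cdot))-F^h(x,s,w(\cdot))\rvert\le C\max(\lvert r-s\rvert,\lVert v-w\rVert_\infty)$ for all grid points $x$. *)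

From Stdlib Require Import Reals ZArith.
Open Scope R_scope.

Definition sgn (x : R) : R :=
  if Rlt_dec 0 x then 1 else if Rlt_dec x 0 then -1 else 0.

Definition cbrt (x : R) : R :=
  if Rlt_dec 0 x then Rpower x (1/3)
  else if Rlt_dec x 0 then - Rpower (- x) (1/3) else 0.

Definition Afun (p q : R) : R := cbrt (p ^ 2 * q).

Definition Adelta (K L p q : R) : R :=
  sgn q * Rmin (Rabs (Afun p q)) (Rmin (K * Rabs p) (L * Rabs q)).

Definition pos_part (x : R) : R := Rmax x 0.
Definition neg_part (x : R) : R := Rmin x 0.

Definition Adelta_plus (K L p q : R) : R := Adelta K L (pos_part p) (pos_part q).
Definition Adelta_minus (K L p q : R) : R := Adelta K L (neg_part p) (neg_part q).

(* The uniform grid of spacing h is { j*h | j : Z }; grid functions are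
   indexed by j : Z.  The finite difference operator is written in the form
   F^h(x, r, v) where r = u(x) and v(y) = u(x) - u(y) for grid points y.
   With a := v(x+h) = u(x)-u(x+h) and b := v(x-h) = u(x)-u(x-h):
     |u_x^h|^+  = max(a/h, b/h, 0),
     -|u_x^h|^- = min(a/h, b/h, 0),
     u_xx^h     = (u(x+h) - 2u(x) + u(x-h))/h^2 = -(a+b)/h^2. *)
Definition F1De (K L h : R) (j : Z) (r : R) (v : Z -> R) : R :=
  let a := v (j + 1)%Z in
  let b := v (j - 1)%Z in
  let ux_plus := Rmax (Rmax (a / h) (b / h)) 0 in
  let mux_minus := Rmin (Rmin (a / h) (b / h)) 0 in
  let mu_xx := (a + b) / h ^ 2 in
  - (Adelta_plus K L ux_plus mu_xx + Adelta_minus K L mux_minus mu_xx).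

From Stdlib Require Import Reals ZArith Lra Psatz.
Open Scope R_scope.

(* Write A^delta(p,q) = sgn(q) m(p,q) with m(p,q) = min(|A(p,q)|, K|p|, L|q|).
   Since |A(p,q)| = (|p|^2 |q|)^(1/3) is positively homogeneous of degree 2/3 < 1
   in |p| and 1/3 < 1 in |q|, the minimum with K|p| (resp. L|q|) grows at most
   linearly, so m is K-Lipschitz in p and L-Lipschitz in q.  As |A^delta(p,q)| <= L|q|,
   the sign flip across q = 0 costs nothing more, and A^delta is Lipschitz with
   constants (K, L).  In the scheme at most one of A^{delta,+}, A^{delta,-} is
   nonzero, and the first-order differences move by at most ||v - w||/h and the
   second-order one by at most 2||v - w||/h^2. *)

Lemma Rmin_lipschitz x y x' y' e :
  Rabs (x - x') <= e -> Rabs (y - y') <= e -> Rabs (Rmin x y - Rmin x' y') <= e.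
Proof.
  unfold Rabs, Rmin; repeat destruct Rcase_abs; repeat destruct Rle_dec; lra.
Qed.

Lemma Rmax_lipschitz x y x' y' e :
  Rabs (x - x') <= e -> Rabs (y - y') <= e -> Rabs (Rmax x y - Rmax x' y') <= e.
Proof.
  unfold Rabs, Rmax; repeat destruct Rcase_abs; repeat destruct Rle_dec; lra.
Qed.

Lemma Rmin_increment_l a a' c d :
  0 <= a' - a <= d -> 0 <= Rmin a' c - Rmin a c <= d.
Proof. unfold Rmin; repeat destruct Rle_dec; lra. Qed.

Lemma Rabs_sub_le_sum x y : Rabs (x - y) <= Rabs x + Rabs y.
Proof. unfold Rabs; repeat destruct Rcase_abs; lra. Qed.

Lemma Rabs_add_opposite_signs x y : x * y <= 0 -> Rabs x + Rabs y = Rabs (x - y).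
Proof. unfold Rabs; repeat destruct Rcase_abs; nra. Qed.

Lemma Rabs_opp_sub x y : Rabs (- x - - y) = Rabs (x - y).
Proof. rewrite <- Rabs_Ropp. f_equal. ring. Qed.

Lemma Rabs_div_sub_le x x' c e :
  0 < c -> Rabs (x - x') <= e -> Rabs (x / c - x' / c) <= e / c.
Proof.
  intros Hc Hx.
  replace (x / c - x' / c) with ((x - x') * / c) by (field; lra).
  rewrite Rabs_mult, Rabs_inv, (Rabs_pos_eq c) by lra.
  apply Rmult_le_compat_r; [left; apply Rinv_0_lt_compat|]; lra.
Qed.

Lemma Rabs_pos_part_sub x y : Rabs (pos_part x - pos_part y) <= Rabs (x - y).
Proof.
  apply Rmax_lipschitz; [lra|]. rewrite Rminus_diag, Rabs_R0. apply Rabs_pos.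
Qed.

Lemma Rabs_neg_part_sub x y : Rabs (neg_part x - neg_part y) <= Rabs (x - y).
Proof.
  apply Rmin_lipschitz; [lra|]. rewrite Rminus_diag, Rabs_R0. apply Rabs_pos.
Qed.

Lemma pos_part_nonpos x : x <= 0 -> pos_part x = 0.
Proof. unfold pos_part, Rmax; destruct Rle_dec; lra. Qed.

Lemma neg_part_nonneg x : 0 <= x -> neg_part x = 0.
Proof. unfold neg_part, Rmin; destruct Rle_dec; lra. Qed.

Lemma Rabs_pos_part_add_neg_part x : Rabs (pos_part x) + Rabs (neg_part x) = Rabs x.
Proof.
  unfold pos_part, neg_part, Rmax, Rmin, Rabs.
  repeat destruct Rle_dec; repeat destruct Rcase_abs; lra.
Qed.

Lemma pow3_le_inv a b : 0 <= a -> 0 <= b -> a ^ 3 <= b ^ 3 -> a <= b.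
Proof.
  intros Ha Hb Hab. destruct (Rle_dec a b) as [|Hba]; [assumption|].
  assert (0 < (a - b) * (a ^ 2 + a * b + b ^ 2)) by (apply Rmult_lt_0_compat; nra).
  nra.
Qed.

Lemma Rpower_third_cube z : 0 < z -> Rpower z (1 / 3) ^ 3 = z.
Proof.
  intros Hz. rewrite <- Rpower_pow by (unfold Rpower; apply exp_pos).
  rewrite Rpower_mult. replace (1 / 3 * INR 3) with 1 by (simpl; field).
  apply Rpower_1; exact Hz.
Qed.

Lemma Rabs_cbrt_cube z : Rabs (cbrt z) ^ 3 = Rabs z.
Proof.
  unfold cbrt. destruct (Rlt_dec 0 z) as [Hz|Hz]; [|destruct (Rlt_dec z 0) as [Hz'|Hz']].
  - rewrite !Rabs_pos_eq by (try apply Rlt_le, exp_pos; lra).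
    apply Rpower_third_cube; exact Hz.
  - rewrite Rabs_Ropp, Rabs_pos_eq by (apply Rlt_le, exp_pos).
    rewrite Rabs_left by exact Hz'. apply Rpower_third_cube; lra.
  - replace z with 0 by lra. rewrite Rabs_R0. ring.
Qed.

Lemma Rabs_Afun_cube p q : Rabs (Afun p q) ^ 3 = Rabs p ^ 2 * Rabs q.
Proof. unfold Afun. rewrite Rabs_cbrt_cube, Rabs_mult, <- RPow_abs. reflexivity. Qed.

Lemma Rabs_Afun_sublinear_p p p' q : Rabs p <= Rabs p' ->
  Rabs (Afun p q) <= Rabs (Afun p' q) /\
  Rabs (Afun p' q) * Rabs p <= Rabs (Afun p q) * Rabs p'.
Proof.
  intros Hp. pose proof (Rabs_pos p). pose proof (Rabs_pos q).
  split; apply pow3_le_inv; try apply Rmult_le_pos; try apply Rabs_pos.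
  - rewrite !Rabs_Afun_cube. apply Rmult_le_compat_r, pow_incr; lra.
  - rewrite !Rpow_mult_distr, !Rabs_Afun_cube.
    assert (0 <= Rabs p ^ 2 * Rabs p' ^ 2 * Rabs q * (Rabs p' - Rabs p)) by
      (apply Rmult_le_pos; [repeat apply Rmult_le_pos|]; nra).
    nra.
Qed.

Lemma Rabs_Afun_sublinear_q p q q' : Rabs q <= Rabs q' ->
  Rabs (Afun p q) <= Rabs (Afun p q') /\
  Rabs (Afun p q') * Rabs q <= Rabs (Afun p q) * Rabs q'.
Proof.
  intros Hq. pose proof (Rabs_pos p). pose proof (Rabs_pos q).
  split; apply pow3_le_inv; try apply Rmult_le_pos; try apply Rabs_pos.
  - rewrite !Rabs_Afun_cube. apply Rmult_le_compat_l; nra.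
  - rewrite !Rpow_mult_distr, !Rabs_Afun_cube.
    assert (0 <= Rabs p ^ 2 * Rabs q * Rabs q' * (Rabs q' ^ 2 - Rabs q ^ 2)) by
      (apply Rmult_le_pos; [repeat apply Rmult_le_pos|]; nra).
    nra.
Qed.

(* The point: Rmin g' (c t') <= (t'/t) Rmin g (c t) when g' t <= g t', so the
   increment is at most (t'/t - 1) c t. *)
Lemma Rmin_sublinear_increment c t t' g g' :
  0 <= c -> 0 <= t <= t' -> 0 <= g <= g' -> g' * t <= g * t' ->
  0 <= Rmin g' (c * t') - Rmin g (c * t) <= c * (t' - t).
Proof.
  intros Hc Ht Hg Hgt.
  destruct (Req_dec t 0) as [->|Ht0].
  - rewrite Rmult_0_r, Rminus_0_r. unfold Rmin; repeat destruct Rle_dec; nra.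
  - unfold Rmin; repeat destruct Rle_dec; nra.
Qed.

Definition Amag (K L p q : R) : R :=
  Rmin (Rabs (Afun p q)) (Rmin (K * Rabs p) (L * Rabs q)).

Lemma Adelta_Amag K L p q : Adelta K L p q = sgn q * Amag K L p q.
Proof. reflexivity. Qed.

Lemma Rabs_sgn_le1 x : Rabs (sgn x) <= 1.
Proof. unfold sgn; repeat destruct Rlt_dec; unfold Rabs; destruct Rcase_abs; lra. Qed.

Lemma sgn_eq_of_mul_pos q q' : 0 < q * q' -> sgn q = sgn q'.
Proof. unfold sgn; intros; repeat destruct Rlt_dec; nra. Qed.

Lemma Adelta_0 K L p : Adelta K L p 0 = 0.
Proof. unfold Adelta, sgn; repeat destruct Rlt_dec; lra. Qed.

Section AdeltaLipschitz.

Variables K L : R.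
Hypothesis HK : 0 <= K.
Hypothesis HL : 0 <= L.

Lemma Amag_increment_p p p' q : Rabs p <= Rabs p' ->
  0 <= Amag K L p' q - Amag K L p q <= K * (Rabs p' - Rabs p).
Proof.
  intros Hp. unfold Amag. rewrite !Rmin_assoc. apply Rmin_increment_l.
  destruct (Rabs_Afun_sublinear_p p p' q Hp).
  apply Rmin_sublinear_increment; repeat split; try apply Rabs_pos; assumption.
Qed.

Lemma Amag_increment_q p q q' : Rabs q <= Rabs q' ->
  0 <= Amag K L p q' - Amag K L p q <= L * (Rabs q' - Rabs q).
Proof.
  intros Hq. unfold Amag. rewrite !(Rmin_comm (K * _)), !Rmin_assoc.
  apply Rmin_increment_l.
  destruct (Rabs_Afun_sublinear_q p q q' Hq).
  apply Rmin_sublinear_increment; repeat split; try apply Rabs_pos; assumption.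
Qed.

Lemma Amag_lipschitz_p p p' q :
  Rabs (Amag K L p q - Amag K L p' q) <= K * Rabs (p - p').
Proof.
  pose proof (Rabs_triang_inv p p') as H1. pose proof (Rabs_triang_inv p' p) as H2.
  rewrite Rabs_minus_sym in H2. apply Rabs_le.
  destruct (Rle_dec (Rabs p) (Rabs p')) as [r|r%Rnot_le_lt].
  - pose proof (Amag_increment_p p p' q r). nra.
  - pose proof (Amag_increment_p p' p q (Rlt_le _ _ r)). nra.
Qed.

Lemma Amag_lipschitz_q p q q' :
  Rabs (Amag K L p q - Amag K L p q') <= L * Rabs (q - q').
Proof.
  pose proof (Rabs_triang_inv q q') as H1. pose proof (Rabs_triang_inv q' q) as H2.
  rewrite Rabs_minus_sym in H2. apply Rabs_le.
  destruct (Rle_dec (Rabs q) (Rabs q')) as [r|r%Rnot_le_lt].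
  - pose proof (Amag_increment_q p q q' r). nra.
  - pose proof (Amag_increment_q p q' q (Rlt_le _ _ r)). nra.
Qed.

Lemma Amag_lipschitz p p' q q' :
  Rabs (Amag K L p q - Amag K L p' q') <= K * Rabs (p - p') + L * Rabs (q - q').
Proof.
  replace (Amag K L p q - Amag K L p' q')
    with ((Amag K L p q - Amag K L p' q) + (Amag K L p' q - Amag K L p' q')) by ring.
  eapply Rle_trans; [apply Rabs_triang|].
  apply Rplus_le_compat; [apply Amag_lipschitz_p|apply Amag_lipschitz_q].
Qed.

Lemma Amag_bound p q : 0 <= Amag K L p q <= L * Rabs q.
Proof.
  unfold Amag. pose proof (Rabs_pos (Afun p q)).
  pose proof (Rabs_pos p). pose proof (Rabs_pos q).
  unfold Rmin; repeat destruct Rle_dec; nra.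
Qed.

Lemma Adelta_bound p q : Rabs (Adelta K L p q) <= L * Rabs q.
Proof.
  rewrite Adelta_Amag, Rabs_mult. pose proof (Amag_bound p q).
  pose proof (Rabs_sgn_le1 q). rewrite (Rabs_pos_eq (Amag K L p q)) by lra.
  pose proof (Rabs_pos (sgn q)). nra.
Qed.

Lemma Adelta_lipschitz p p' q q' :
  Rabs (Adelta K L p q - Adelta K L p' q') <= K * Rabs (p - p') + L * Rabs (q - q').
Proof.
  pose proof (Rabs_pos (p - p')).
  destruct (Rle_dec (q * q') 0) as [Hqq|Hqq].
  - pose proof (Adelta_bound p q). pose proof (Adelta_bound p' q').
    pose proof (Rabs_sub_le_sum (Adelta K L p q) (Adelta K L p' q')).
    rewrite <- (Rabs_add_opposite_signs q q' Hqq). nra.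
  - rewrite !Adelta_Amag, (sgn_eq_of_mul_pos q q') by lra.
    rewrite <- Rmult_minus_distr_l, Rabs_mult.
    pose proof (Rabs_sgn_le1 q'). pose proof (Rabs_pos (sgn q')).
    pose proof (Rabs_pos (Amag K L p q - Amag K L p' q')).
    pose proof (Amag_lipschitz p p' q q'). nra.
Qed.

Lemma Adelta_pm_bound P N Q :
  Rabs (Adelta_plus K L P Q + Adelta_minus K L N Q) <= L * Rabs Q.
Proof.
  unfold Adelta_plus, Adelta_minus.
  eapply Rle_trans; [apply Rabs_triang|].
  rewrite <- (Rabs_pos_part_add_neg_part Q), Rmult_plus_distr_l.
  apply Rplus_le_compat; apply Adelta_bound.
Qed.

Lemma Adelta_pm_lipschitz P N Q P' N' Q' e :
  Rabs (P - P') <= e -> Rabs (N - N') <= e ->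
  Rabs ((Adelta_plus K L P Q + Adelta_minus K L N Q) -
        (Adelta_plus K L P' Q' + Adelta_minus K L N' Q')) <= K * e + L * Rabs (Q - Q').
Proof.
  intros HP HN. pose proof (Rabs_pos (P - P')).
  destruct (Rle_dec (Q * Q') 0) as [HQQ|HQQ].
  - pose proof (Adelta_pm_bound P N Q). pose proof (Adelta_pm_bound P' N' Q').
    pose proof (Rabs_sub_le_sum (Adelta_plus K L P Q + Adelta_minus K L N Q)
                               (Adelta_plus K L P' Q' + Adelta_minus K L N' Q')).
    rewrite <- (Rabs_add_opposite_signs Q Q' HQQ). nra.
  - pose proof (Rabs_pos_part_sub P P'). pose proof (Rabs_pos_part_sub Q Q').
    pose proof (Rabs_neg_part_sub N N'). pose proof (Rabs_neg_part_sub Q Q').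
    unfold Adelta_plus, Adelta_minus.
    destruct (Rle_dec 0 Q).
    + rewrite !(neg_part_nonneg Q), !(neg_part_nonneg Q'), !Adelta_0 by nra.
      pose proof (Adelta_lipschitz (pos_part P) (pos_part P') (pos_part Q) (pos_part Q')).
      rewrite !Rplus_0_r. nra.
    + rewrite !(pos_part_nonpos Q), !(pos_part_nonpos Q'), !Adelta_0 by nra.
      pose proof (Adelta_lipschitz (neg_part N) (neg_part N') (neg_part Q) (neg_part Q')).
      rewrite !Rplus_0_l. nra.
Qed.

End AdeltaLipschitz.

Theorem mainTheorem10 (K L h : R) (HK : 0 < K) (HL : 0 < L) (Hh : 0 < h) :
  forall (j : Z) (r s : R) (v w : Z -> R) (M : R),
    Rabs (r - s) <= M ->
    (forall k : Z, Rabs (v k - w k) <= M) ->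
    Rabs (F1De K L h j r v - F1De K L h j s w) <= (K / h + 2 * L / h ^ 2) * M.
Proof.
  intros j r s v w M _ Hvw.
  assert (Hh2 : 0 < h ^ 2) by (apply pow_lt; lra).
  pose proof (Rabs_div_sub_le _ _ h M Hh (Hvw (j + 1)%Z)) as Ha.
  pose proof (Rabs_div_sub_le _ _ h M Hh (Hvw (j - 1)%Z)) as Hb.
  assert (HQ : Rabs ((v (j + 1)%Z + v (j - 1)%Z) / h ^ 2 -
                      (w (j + 1)%Z + w (j - 1)%Z) / h ^ 2) <= 2 * M / h ^ 2).
  { apply Rabs_div_sub_le; [exact Hh2|].
    replace (_ - _) with ((v (j + 1)%Z - w (j + 1)%Z) + (v (j - 1)%Z - w (j - 1)%Z))
      by ring.
    pose proof (Hvw (j + 1)%Z). pose proof (Hvw (j - 1)%Z).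
    eapply Rle_trans; [apply Rabs_triang|lra]. }
  assert (HMh : 0 <= M / h)
    by (pose proof (Rabs_pos (v (j + 1)%Z / h - w (j + 1)%Z / h)); lra).
  assert (H00 : Rabs (0 - 0) <= M / h) by (rewrite Rminus_diag, Rabs_R0; exact HMh).
  unfold F1De; cbv zeta.
  rewrite Rabs_opp_sub.
  replace ((K / h + 2 * L / h ^ 2) * M) with (K * (M / h) + L * (2 * M / h ^ 2))
    by (field; lra).
  eapply Rle_trans.
  - apply (Adelta_pm_lipschitz K L (Rlt_le _ _ HK) (Rlt_le _ _ HL) _ _ _ _ _ _ (M / h)).
    + apply Rmax_lipschitz; [apply Rmax_lipschitz|]; assumption.
    + apply Rmin_lipschitz; [apply Rmin_lipschitz|]; assumption.
  - apply Rplus_le_compat_l, Rmult_le_compat_l; lra.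
Qed.
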